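(* The presentations $$\mathcal P_1=\langle a,b,c,d,r,s\mid ab\bar a r,\ \bar r\bar b c s,\ \bar s d\bar c\bar d\rangle,\qquad \mathcal P_2=\langle a,b,c,d,r,s,t,u,v\mid abr,\ \bar r\bar a s,\ \bar s\bar b t,\ \bar t c u,\ \bar u d v,\ \bar v\bar c\bar d\rangle$$ (where $\bar x=x^{-1}$) are of small cancellation type $C(4)$–$T(5)$ and $C(3)$–$T(7)$ respectively, both present the fundamental group of the closed orientable surface of genus two, and neither is a Dehn presentation.
   Context: $C(p)$ and $T(q)$ are the standard small cancellation conditions (no relator in the symmetrized closure is a product of fewer than $p$ pieces; $T(q)$ is the standard condition on cycles of relators of length between 3 and $q-1$). A presentation is a Dehn presentation if every nonempty cyclically reduced word representing the identity contains a subword $v$ of (a cyclic permutation of) some relator $r^{\pm1}$ with $|v|>|r|/2$. *)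

From Stdlib Require Import Relations.
From mathcomp Require Import all_boot.
Set Implicit Arguments. Unset Strict Implicit. Unset Printing Implicit Defensive.

(* A letter is (generator index, inverted?) ; (x,false) = x, (x,true) = x^-1. *)
Definition letter := (nat * bool)%type.
Definition word := seq letter.

Definition linv (l : letter) : letter := (l.1, ~~ l.2).
Definition winv (w : word) : word := rev (map linv w).

Definition wf_word (n : nat) (w : word) : bool := all (fun l => l.1 < n) w.

Fixpoint freely_reduced (w : word) : bool :=
  match w with
  | x :: ((y :: _) as t) => (y != linv x) && freely_reduced t
  | _ => true
  end.

Definition cyc_reduced (w : word) : bool :=
  freely_reduced w && (if w is x :: _ then last x w != linv x else true).

Definition relators := seq word.

(* Equality in the presented group: congruence generated by free
   cancellation and insertion/deletion of relators and their inverses. *)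
Inductive gstep (R : relators) : word -> word -> Prop :=
| gstep_free u1 u2 x : gstep R (u1 ++ x :: linv x :: u2) (u1 ++ u2)
| gstep_rel u1 u2 r : r \in R -> gstep R (u1 ++ r ++ u2) (u1 ++ u2)
| gstep_relinv u1 u2 r : r \in R -> gstep R (u1 ++ winv r ++ u2) (u1 ++ u2).

Definition word_eq (R : relators) : word -> word -> Prop :=
  clos_refl_sym_trans word (gstep R).

Definition symm (R : relators) : seq word :=
  flatten [seq [seq rot i r' | i <- iota 0 (size r')]
          | r' <- flatten [seq [:: r; winv r] | r <- R]].

Definition piece (R : relators) (p : word) : Prop :=
  p != [::] /\
  exists r1 r2, [/\ r1 \in symm R, r2 \in symm R, r1 != r2,
                    prefix p r1 & prefix p r2].

Definition C_cond (p : nat) (R : relators) : Prop :=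
  forall r, r \in symm R ->
  forall ps : seq word, (forall q, q \in ps -> piece R q) ->
  flatten ps = r -> p <= size ps.

Definition T_cond (q : nat) (R : relators) : Prop :=
  forall h, 3 <= h -> h < q ->
  forall rs : seq word, size rs = h ->
  (forall r, r \in rs -> r \in symm R) ->
  (forall i, i.+1 < h -> nth [::] rs i.+1 != winv (nth [::] rs i)) ->
  exists2 i, i < h &
    freely_reduced (nth [::] rs i ++ nth [::] rs ((i.+1) %% h)).

Definition Dehn (n : nat) (R : relators) : Prop :=
  forall w : word, wf_word n w -> w != [::] -> cyc_reduced w ->
  word_eq R w [::] ->
  exists v r, [/\ r \in symm R, infix v w, prefix v r & size r < 2 * size v].

Definition wsubst (f : nat -> word) (w : word) : word :=
  flatten [seq (if l.2 then winv (f l.1) else f l.1) | l <- w].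

Definition is_hom (n2 : nat) (R1 R2 : relators) (f : nat -> word) : Prop :=
  (forall x, wf_word n2 (f x)) /\
  (forall r, r \in R1 -> word_eq R2 (wsubst f r) [::]).

Definition pres_iso (n1 : nat) (R1 : relators) (n2 : nat) (R2 : relators) : Prop :=
  exists (f g : nat -> word),
    [/\ is_hom n2 R1 R2 f, is_hom n1 R2 R1 g,
        (forall x, x < n1 -> word_eq R1 (wsubst g (f x)) [:: (x, false)]) &
        (forall y, y < n2 -> word_eq R2 (wsubst f (g y)) [:: (y, false)])].

(* generators: a,b,c,d,r,s = 0,1,2,3,4,5 *)
Definition P1 : relators :=
  [:: [:: (0,false); (1,false); (0,true); (4,false)];
      [:: (4,true); (1,true); (2,false); (5,false)];
      [:: (5,true); (3,false); (2,true); (3,true)]].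

(* generators: a,b,c,d,r,s,t,u,v = 0,...,8 *)
Definition P2 : relators :=
  [:: [:: (0,false); (1,false); (4,false)];
      [:: (4,true); (0,true); (5,false)];
      [:: (5,true); (1,true); (6,false)];
      [:: (6,true); (2,false); (7,false)];
      [:: (7,true); (3,false); (8,false)];
      [:: (8,true); (2,true); (3,true)]].

(* standard presentation of pi_1 of the closed orientable genus-2 surface:
   <a1,b1,a2,b2 | [a1,b1][a2,b2]>, generators a1,b1,a2,b2 = 0,1,2,3 *)
Definition Surf2 : relators :=
  [:: [:: (0,false); (1,false); (0,true); (1,true);
          (2,false); (3,false); (2,true); (3,true)]].

(** Every assertion is about finitely many explicit finite objects and is
    decided by computation.  C(p) and T(q) only involve the finite
    symmetrized closure R^*: one enumerates all splittings of its elements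
    into pieces and all chains of its elements whose consecutive products
    cancel.  Both presentations arise from the surface relator
    [[a,b][c,d]] by Tietze moves introducing new generators for prefixes of
    it (in P1, r = a b^-1 a^-1 and s = c^-1 b r), so a, b, c, d map to
    themselves and the new generators to the prefixes they name.  Equalities
    in a presented group are certified by listing the conjugates of relators
    to insert before freely reducing.  Neither presentation is Dehn because
    of an explicit cyclically reduced trivial word containing no subword of
    more than half of a relator of R^*. *)

From Stdlib Require Import Relations.
From mathcomp Require Import all_boot.
Set Implicit Arguments. Unset Strict Implicit. Unset Printing Implicit Defensive.

Lemma all2_mem_ex (S : eqType) (T : Type) (r : S -> T -> bool) s t x :
  all2 r s t -> x \in s -> exists c, r x c.
Proof.
elim: s t => [|y s IH] [|c t] //= /andP [ryc rst].
by rewrite inE => /orP [/eqP ->|xs]; [exists c | exact: IH rst xs].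
Qed.

Section WordEquality.

Variable R : relators.

Lemma word_eq_refl w : word_eq R w w.
Proof. exact: rst_refl. Qed.

Lemma word_eq_sym u v : word_eq R u v -> word_eq R v u.
Proof. exact: rst_sym. Qed.

Lemma word_eq_trans u v w : word_eq R u v -> word_eq R v w -> word_eq R u w.
Proof. exact: rst_trans. Qed.

Lemma word_eq_step u v : gstep R u v -> word_eq R u v.
Proof. exact: rst_step. Qed.

Lemma gstep_cons x u v : gstep R u v -> gstep R (x :: u) (x :: v).
Proof.
case=> [u1 u2 y|u1 u2 r rR|u1 u2 r rR].
- exact: (gstep_free R (x :: u1) u2 y).
- exact: (gstep_rel (x :: u1) u2 rR).
- exact: (gstep_relinv (x :: u1) u2 rR).
Qed.

Lemma word_eq_cons x u v : word_eq R u v -> word_eq R (x :: u) (x :: v).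
Proof.
elim=> [a b uv|a|a b _ IH|a b c _ IH1 _ IH2].
- by apply: word_eq_step; apply: gstep_cons.
- exact: word_eq_refl.
- exact: word_eq_sym.
- exact: word_eq_trans IH2.
Qed.

Definition red_cons (x : letter) (acc : word) : word :=
  if acc is y :: t then (if y == linv x then t else x :: acc) else [:: x].

Definition free_reduce (w : word) : word := foldr red_cons [::] w.

Lemma word_eq_free_reduce w : word_eq R w (free_reduce w).
Proof.
elim: w => [|x w IH] /=; first exact: word_eq_refl.
apply: word_eq_trans (word_eq_cons x IH) _.
rewrite /red_cons; case: (free_reduce w) => [|y t]; first exact: word_eq_refl.
case: eqP => [->|_]; last exact: word_eq_refl.
by apply: word_eq_step; exact: (gstep_free R [::] t x).
Qed.

Lemma word_eq_insert_free z u v : word_eq R (u ++ v) (u ++ z ++ winv z ++ v).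
Proof.
elim: z u v => [|x z IH] u v /=; first exact: word_eq_refl.
have cancel_x : word_eq R (u ++ v) (u ++ x :: linv x :: v).
  by apply: word_eq_sym; apply: word_eq_step; apply: gstep_free.
apply: word_eq_trans cancel_x _.
by have := IH (rcons u x) (linv x :: v); rewrite /winv rev_cons -!cats1 -!catA.
Qed.

Lemma word_eq_insert_conj z r (b : bool) u v : r \in R ->
  word_eq R (u ++ v) (u ++ z ++ (if b then winv r else r) ++ winv z ++ v).
Proof.
move=> rR; apply: word_eq_trans (word_eq_insert_free z u v) _.
apply: word_eq_sym; apply: word_eq_step.
have := gstep_relinv (u ++ z) (winv z ++ v) rR; have := gstep_rel (u ++ z) (winv z ++ v) rR.
by rewrite -!catA; case: b.
Qed.

(* [(k, z, i, b)] inserts [z (r_i)^{+-1} z^-1] after the first [k] letters,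
   with [r_i] the [i]-th relator and the inverse taken when [b] holds. *)
Definition insertion := (nat * word * nat * bool)%type.

Definition insert_conj (m : insertion) (w : word) : word :=
  let: (k, z, i, b) := m in
  if i < size R then
    free_reduce (take k w ++ z ++ (if b then winv (nth [::] R i) else nth [::] R i)
                   ++ winv z ++ drop k w)
  else w.

Fixpoint insert_conjs (w : word) (ms : seq insertion) : word :=
  if ms is m :: ms' then insert_conjs (insert_conj m w) ms' else free_reduce w.

Lemma word_eq_insert_conjs w ms : word_eq R w (insert_conjs w ms).
Proof.
elim: ms w => [|[[[k z] i] b] ms IH] w /=; first exact: word_eq_free_reduce.
apply: word_eq_trans (IH _); rewrite /insert_conj.
case: ifP => iR; last exact: word_eq_refl.
apply: word_eq_trans (word_eq_free_reduce _).
rewrite -{1}(cat_take_drop k w).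
exact: word_eq_insert_conj (mem_nth [::] iR).
Qed.

Lemma word_eq_certified w t ms1 ms2 :
  insert_conjs w ms1 == insert_conjs t ms2 -> word_eq R w t.
Proof.
move/eqP=> E; apply: word_eq_trans (word_eq_insert_conjs w ms1) _.
by rewrite E; apply: word_eq_sym; apply: word_eq_insert_conjs.
Qed.

End WordEquality.

Section FiniteChecks.

Variable R : relators.

Definition pieceb (p : word) : bool :=
  (p != [::]) &&
  has (fun r1 => has (fun r2 => [&& r1 != r2, prefix p r1 & prefix p r2]) (symm R))
      (symm R).

Lemma piece_pieceb p : piece R p -> pieceb p.
Proof.
case=> p0 [r1 [r2 [r1R r2R r12 pr1 pr2]]].
rewrite /pieceb p0; apply/hasP; exists r1 => //; apply/hasP; exists r2 => //.
by rewrite r12 pr1 pr2.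
Qed.

Fixpoint at_most_pieces (n : nat) (w : word) : bool :=
  if n is n'.+1 then
    (w == [::]) ||
    has (fun i => pieceb (take i w) && at_most_pieces n' (drop i w)) (iota 1 (size w))
  else w == [::].

Lemma at_most_pieces_flatten ps :
  (forall q, q \in ps -> piece R q) -> at_most_pieces (size ps) (flatten ps).
Proof.
elim: ps => [|q ps IH] //= pieces_ps.
have /piece_pieceb pq := pieces_ps q (mem_head _ _).
apply/orP; right; apply/hasP; exists (size q).
  rewrite mem_iota size_cat add1n ltnS leq_addr andbT lt0n size_eq0.
  by case/andP: pq.
rewrite take_size_cat // drop_size_cat // pq /=.
by apply: IH => r rps; apply: pieces_ps; rewrite inE rps orbT.
Qed.

Definition C_condb (p : nat) : bool :=
  all (fun r => all (fun n => ~~ at_most_pieces n r) (iota 0 p)) (symm R).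

Lemma C_condb_sound p : C_condb p -> C_cond p R.
Proof.
move=> Cp r rR ps pieces_ps flat_ps; rewrite leqNgt; apply/negP => small.
have := allP (allP Cp r rR) (size ps); rewrite mem_iota small => /(_ isT).
by rewrite -flat_ps at_most_pieces_flatten.
Qed.

Definition linked (u v : word) : bool := ~~ freely_reduced (u ++ v) && (v != winv u).

Fixpoint chains (u : word) (k : nat) : seq (seq word) :=
  if k is k'.+1 then
    flatten [seq [seq u :: p | p <- chains v k'] | v <- symm R & linked u v]
  else [:: [:: u]].

Lemma chains_complete u rs :
  {subset rs <= symm R} ->
  (forall i, i < size rs -> linked (nth [::] (u :: rs) i) (nth [::] (u :: rs) i.+1)) ->
  u :: rs \in chains u (size rs).
Proof.
elim: rs u => [|v rs IH] u /=; first by rewrite inE.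
move=> rsR link; apply/flatten_mapP; exists v.
  by rewrite mem_filter rsR ?mem_head // andbT (link 0).
apply: map_f; apply: IH => [r r_rs|i]; last exact: (link i.+1).
by apply: rsR; rewrite inE r_rs orbT.
Qed.

(* A chain of h elements of R^* can violate T(q) only if all its consecutive
   products but the closing one cancel, and [chains] enumerates exactly those. *)
Definition T_condb (q : nat) : bool :=
  all (fun h => all (fun u => all (fun p => freely_reduced (nth [::] p h.-1 ++ nth [::] p 0))
                                  (chains u h.-1)) (symm R))
      (iota 3 (q - 3)).

Lemma T_condb_sound q : T_condb q -> T_cond q R.
Proof.
move=> Tq h h3 hq rs size_rs rsR no_inv.
have /(allP Tq) Th : h \in iota 3 (q - 3).
  by rewrite mem_iota h3 subnKC ?hq // (leq_trans h3 (ltnW hq)).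
have [|none] := boolP (has (fun i => freely_reduced (nth [::] rs i ++ nth [::] rs (i.+1 %% h)))
                           (iota 0 h)).
  by case/hasP=> i; rewrite mem_iota => ih red; exists i.
exfalso; move/hasPn: none.
case: rs size_rs rsR no_inv => [h0|u rs h_rs]; first by rewrite -h0 in h3.
subst h => rsR no_inv none.
have uR : u \in symm R by apply: rsR; exact: mem_head.
have chain : u :: rs \in chains u (size rs).
  apply: chains_complete => [r r_rs|i i_rs]; first by apply: rsR; rewrite inE r_rs orbT.
  rewrite /linked no_inv ?ltnS // andbT.
  by have := none i; rewrite mem_iota /= modn_small ?ltnS // (ltnW i_rs); apply.
have := allP (allP Th u uR) _ chain.
by have := none (size rs); rewrite mem_iota /= modnn ltnSn => /(_ isT) /negbTE ->.
Qed.

Definition no_long_relator_subword (w : word) : bool :=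
  all (fun r => all (fun k => ~~ infix (take k r) w || (2 * k <= size r))
                    (iota 0 (size r).+1)) (symm R).

Lemma not_Dehn_of_witness n w ms :
  wf_word n w -> w != [::] -> cyc_reduced w ->
  insert_conjs R w ms == [::] -> no_long_relator_subword w -> ~ Dehn n R.
Proof.
move=> wf_w w0 red_w trivial_w short dehn.
have /(dehn w wf_w w0 red_w) [v [r [rR vw vr long]]] : word_eq R w [::].
  exact: (word_eq_certified (t := [::]) (ms2 := [::]) trivial_w).
have := allP (allP short r rR) (size v).
rewrite mem_iota ltnS size_prefix // => /(_ isT).
by move: vr; rewrite prefixE => /eqP ->; rewrite vw leqNgt long.
Qed.

End FiniteChecks.

Lemma wf_word_nth n (tab : seq word) x : all (wf_word n) tab -> wf_word n (nth [::] tab x).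
Proof.
move=> wf_tab; case: (ltnP x (size tab)) => x_tab; first exact: (all_nthP [::] wf_tab).
by rewrite nth_default.
Qed.

Definition kills_relators (R2 : relators) (tab : seq word) (R1 : relators)
    (cert : seq (seq insertion)) : bool :=
  all2 (fun r ms => insert_conjs R2 (wsubst (nth [::] tab) r) ms == [::]) R1 cert.

Lemma kills_relators_sound R2 tab R1 cert : kills_relators R2 tab R1 cert ->
  forall r, r \in R1 -> word_eq R2 (wsubst (nth [::] tab) r) [::].
Proof.
move=> kill r rR1; have [ms] := all2_mem_ex kill rR1.
exact: (word_eq_certified (t := [::]) (ms2 := [::])).
Qed.

Definition fixes_generators (R : relators) (h : nat -> word) (n : nat)
    (cert : seq (seq insertion)) : bool :=
  all2 (fun x ms => free_reduce (h x) == insert_conjs R [:: (x, false)] ms) (iota 0 n) cert.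

Lemma fixes_generators_sound R h n cert : fixes_generators R h n cert ->
  forall x, x < n -> word_eq R (h x) [:: (x, false)].
Proof.
move=> fix_h x xn; have [|ms] := all2_mem_ex fix_h (_ : x \in iota 0 n).
  by rewrite mem_iota.
exact: (word_eq_certified (ms1 := [::])).
Qed.

Lemma pres_iso_certified n1 R1 n2 R2 (ftab gtab : seq word) cf cg cgf cfg :
  all (wf_word n2) ftab -> all (wf_word n1) gtab ->
  kills_relators R2 ftab R1 cf -> kills_relators R1 gtab R2 cg ->
  fixes_generators R1 (fun x => wsubst (nth [::] gtab) (nth [::] ftab x)) n1 cgf ->
  fixes_generators R2 (fun y => wsubst (nth [::] ftab) (nth [::] gtab y)) n2 cfg ->
  pres_iso n1 R1 n2 R2.
Proof.
move=> wf_f wf_g kf kg fgf ffg.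
exists (nth [::] ftab), (nth [::] gtab); split.
- by split; [move=> x; exact: wf_word_nth | exact: kills_relators_sound kf].
- by split; [move=> x; exact: wf_word_nth | exact: kills_relators_sound kg].
- exact: fixes_generators_sound fgf.
- exact: fixes_generators_sound ffg.
Qed.

Definition Surf2_gens : seq word := [seq [:: (y, false)] | y <- iota 0 4].

Definition P1_gens_in_Surf2 : seq word :=
  Surf2_gens ++
  [:: [:: (0,false); (1,true); (0,true)];
      [:: (2,true); (1,false); (0,false); (1,true); (0,true)]].

Definition P2_gens_in_Surf2 : seq word :=
  Surf2_gens ++
  [:: [:: (1,true); (0,true)];
      [:: (0,false); (1,true); (0,true)];
      [:: (1,false); (0,false); (1,true); (0,true)];
      [:: (2,true); (1,false); (0,false); (1,true); (0,true)];
      [:: (3,true); (2,true); (1,false); (0,false); (1,true); (0,true)]].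

Definition P1_to_Surf2_cert : seq (seq insertion) :=
  [:: [::]; [::]; [:: (8,[::],0,true)]].

Definition Surf2_to_P1_cert : seq (seq insertion) :=
  [:: [:: (8,[::],2,true); (6,[::],1,true); (4,[::],0,true)]].

Definition P1_roundtrip_cert : seq (seq insertion) :=
  [:: [::]; [::]; [::]; [::]; [:: (1,[::],0,true)];
      [:: (1,[::],1,true); (3,[::],0,true)]].

Definition P2_to_Surf2_cert : seq (seq insertion) :=
  [:: [::]; [::]; [::]; [::]; [::]; [:: (8,[::],0,true)]].

Definition Surf2_to_P2_cert : seq (seq insertion) :=
  [:: [:: (8,[::],5,true); (7,[::],4,true); (6,[::],3,true); (5,[::],2,true);
          (4,[::],1,true); (3,[::],0,true)]].

Definition P2_roundtrip_cert : seq (seq insertion) :=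
  [:: [::]; [::]; [::]; [::]; [:: (1,[::],0,true)];
      [:: (1,[::],1,true); (2,[::],0,true)];
      [:: (1,[::],2,true); (2,[::],1,true); (3,[::],0,true)];
      [:: (1,[::],3,true); (2,[::],2,true); (3,[::],1,true); (4,[::],0,true)];
      [:: (1,[::],4,true); (2,[::],3,true); (3,[::],2,true); (4,[::],1,true);
          (5,[::],0,true)]].

Definition P1_non_Dehn_word : word :=
  [:: (1,false); (0,true); (1,true); (2,false); (3,false); (2,true); (2,true); (3,true);
      (4,true); (1,true); (3,true); (5,true); (5,true); (3,false); (5,false); (4,true);
      (0,true); (4,false); (4,false); (0,false); (2,false); (5,false); (0,false); (1,false)].

Definition P1_non_Dehn_cert : seq insertion :=
  [:: (24,[:: (0,true); (0,false); (1,true); (0,true)],0,true);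
      (24,[:: (0,true); (4,false)],1,true);
      (22,[:: (0,true); (1,true); (0,true)],0,true);
      (20,[:: (0,true); (0,true)],0,true);
      (18,[:: (0,true); (1,false); (4,false)],1,true);
      (16,[:: (0,true); (2,false); (3,true); (5,false)],2,true);
      (14,[:: (0,true); (3,true); (5,false)],2,true);
      (12,[:: (0,true); (2,true); (1,false); (4,false)],1,true);
      (10,[:: (0,true); (5,false)],2,true);
      (8,[:: (0,true)],2,true); (6,[:: (0,true)],1,true); (4,[:: (0,true)],0,true)].

Definition P2_non_Dehn_word : word :=
  [:: (1,false); (0,true); (1,true); (2,false); (3,false); (2,true); (8,false); (6,true);
      (3,true); (7,true); (8,true); (7,false); (5,true); (4,false); (5,false); (0,false);
      (6,false); (4,true)].

Definition P2_non_Dehn_cert : seq insertion :=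
  [:: (18,[:: (0,true); (0,false); (4,false)],1,true);
      (19,[:: (0,true); (5,false)],2,true);
      (18,[:: (0,true); (1,true); (0,true)],0,true);
      (17,[:: (0,true); (4,false)],1,true);
      (16,[:: (0,true); (0,true)],0,true);
      (15,[:: (0,true); (1,false); (5,false)],2,true);
      (14,[:: (0,true); (6,false)],3,true);
      (13,[:: (0,true); (2,false); (8,false)],5,true);
      (12,[:: (0,true); (3,true); (7,false)],4,true);
      (11,[:: (0,true); (8,false)],5,true);
      (10,[:: (0,true); (2,true); (6,false)],3,true);
      (9,[:: (0,true); (7,false)],4,true);
      (8,[:: (0,true)],5,true); (7,[:: (0,true)],4,true); (6,[:: (0,true)],3,true);
      (5,[:: (0,true)],2,true); (4,[:: (0,true)],1,true); (3,[:: (0,true)],0,true)].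

Lemma P1_C4_T5 : C_cond 4 P1 /\ T_cond 5 P1.
Proof. by split; [apply: C_condb_sound | apply: T_condb_sound]; vm_compute. Qed.

Lemma P2_C3_T7 : C_cond 3 P2 /\ T_cond 7 P2.
Proof. by split; [apply: C_condb_sound | apply: T_condb_sound]; vm_compute. Qed.

Lemma P1_pres_iso_Surf2 : pres_iso 6 P1 4 Surf2.
Proof.
apply: (@pres_iso_certified 6 P1 4 Surf2 P1_gens_in_Surf2 Surf2_gens
          P1_to_Surf2_cert Surf2_to_P1_cert P1_roundtrip_cert (nseq 4 [::])).
all: by vm_compute.
Qed.

Lemma P2_pres_iso_Surf2 : pres_iso 9 P2 4 Surf2.
Proof.
apply: (@pres_iso_certified 9 P2 4 Surf2 P2_gens_in_Surf2 Surf2_gens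
          P2_to_Surf2_cert Surf2_to_P2_cert P2_roundtrip_cert (nseq 4 [::])).
all: by vm_compute.
Qed.

Lemma P1_not_Dehn : ~ Dehn 6 P1.
Proof.
by apply: (not_Dehn_of_witness (w := P1_non_Dehn_word) (ms := P1_non_Dehn_cert)); vm_compute.
Qed.

Lemma P2_not_Dehn : ~ Dehn 9 P2.
Proof.
by apply: (not_Dehn_of_witness (w := P2_non_Dehn_word) (ms := P2_non_Dehn_cert)); vm_compute.
Qed.

Theorem mainTheorem7 :
  [/\ C_cond 4 P1 /\ T_cond 5 P1,
      C_cond 3 P2 /\ T_cond 7 P2,
      pres_iso 6 P1 4 Surf2 /\ pres_iso 9 P2 4 Surf2 &
      ~ Dehn 6 P1 /\ ~ Dehn 9 P2].
Proof.
split; [exact: P1_C4_T5 | exact: P2_C3_T7 | split | split].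
- exact: P1_pres_iso_Surf2.
- exact: P2_pres_iso_Surf2.
- exact: P1_not_Dehn.
- exact: P2_not_Dehn.
Qed.
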